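(* For every integer $k\ge 0$, $$\varphi(2k):=\int_0^1t^{2k}\sqrt{1+t^2}\,\mathrm{d}t=\frac{(-1)^k}{4^k} \frac{\binom{2k}{k}}{k+1}\left(I(0)+\sqrt{2}\sum_{p=1}^k\frac{(-1)^p4^p}{\binom{2p}{p}}\right),$$ where $I(0)=\frac{\sqrt{2}}{2}+\frac{\ln(1+\sqrt{2})}{2}$. *)

From Stdlib Require Import Reals.
From Coquelicot Require Import Coquelicot.
Open Scope R_scope.

Definition phi (n : nat) : R := RInt (fun t => t ^ n * sqrt (1 + t ^ 2)) 0 1.

Definition I0 : R := sqrt 2 / 2 + ln (1 + sqrt 2) / 2.

(* Differentiating t^(n+1) (1+t^2)^(3/2) produces exactly the integrand of
   (n+1) phi(n) + (n+4) phi(n+2), so this combination equals 2 sqrt 2.  For the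
   even moments u_k = phi(2k) it is a first-order linear recurrence
   u_(k+1) = -(2k+1)/(2k+4) u_k + sqrt 2/(k+2), whose homogeneous solution is
   c_k = (-1/4)^k C(2k,k)/(k+1); variation of constants gives
   u_k = c_k (u_0 + sum_(p=1..k) sqrt 2/((p+1) c_p)).  Finally u_0 = I(0), as
   (t sqrt(1+t^2) + ln(t + sqrt(1+t^2)))/2 is a primitive of sqrt(1+t^2). *)

From Stdlib Require Import Reals Lra Lia.
From Coquelicot Require Import Coquelicot.
Open Scope R_scope.

Lemma is_derive_eq_r (f : R -> R) (x l l' : R) : is_derive f x l -> l = l' -> is_derive f x l'.
Proof. now intros H <-. Qed.

Lemma RInt_primitive (F f : R -> R) (a b : R) :
  (forall t, is_derive F t (f t)) -> (forall t, continuous f t) -> RInt f a b = F b - F a.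
Proof.
  intros HF Hf; apply is_RInt_unique.
  apply (is_RInt_derive (V := R_CompleteNormedModule)); intros t _; auto.
Qed.

Lemma sqrt_1_plus_sq_pos t : 0 < sqrt (1 + t ^ 2).
Proof. apply sqrt_lt_R0; nra. Qed.

Lemma sqrt_1_plus_sq_sq t : sqrt (1 + t ^ 2) * sqrt (1 + t ^ 2) = 1 + t ^ 2.
Proof. apply sqrt_sqrt; nra. Qed.

Lemma add_sqrt_1_plus_sq_pos t : 0 < t + sqrt (1 + t ^ 2).
Proof.
  pose proof (sqrt_1_plus_sq_pos t); pose proof (sqrt_1_plus_sq_sq t).
  destruct (Rle_or_lt 0 t); nra.
Qed.

Lemma is_derive_1_plus_sq t : is_derive (fun x => 1 + x ^ 2) t (2 * t).
Proof. auto_derive; [exact I | ring]. Qed.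

Lemma is_derive_sqrt_1_plus_sq t :
  is_derive (fun x => sqrt (1 + x ^ 2)) t (t / sqrt (1 + t ^ 2)).
Proof.
  apply (is_derive_eq_r _ _ _ _ (is_derive_sqrt _ _ _ (is_derive_1_plus_sq t) ltac:(nra))).
  pose proof (sqrt_1_plus_sq_pos t); field; lra.
Qed.

Definition phi_integrand (n : nat) (t : R) : R := t ^ n * sqrt (1 + t ^ 2).

Lemma phi_integrand_continuous n t : continuous (phi_integrand n) t.
Proof.
  apply (ex_derive_continuous (V := R_NormedModule)); eexists.
  exact (is_derive_mult _ _ _ _ _ (is_derive_pow _ n t 1 (is_derive_id t))
           (is_derive_sqrt_1_plus_sq t) Rmult_comm).
Qed.

Lemma is_derive_recurrence_primitive n t :
  is_derive (fun x => x ^ S n * ((1 + x ^ 2) * sqrt (1 + x ^ 2))) t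
    ((INR n + 1) * phi_integrand n t + (INR n + 4) * phi_integrand (n + 2) t).
Proof.
  pose proof (is_derive_mult _ _ _ _ _ (is_derive_pow _ (S n) t 1 (is_derive_id t))
    (is_derive_mult _ _ _ _ _ (is_derive_1_plus_sq t) (is_derive_sqrt_1_plus_sq t) Rmult_comm)
    Rmult_comm) as H.
  apply (is_derive_eq_r _ _ _ _ H); unfold phi_integrand, mult, plus; cbn -[pow INR sqrt Rmult Rplus].
  pose proof (sqrt_1_plus_sq_pos t) as Hpos; pose proof (sqrt_1_plus_sq_sq t) as Hsq.
  set (s := sqrt (1 + t ^ 2)) in *; clearbody s.
  replace ((1 + t ^ 2) * (t / s)) with (t * s) by (rewrite <- Hsq; field; lra).
  rewrite S_INR, pow_add; simpl; ring.
Qed.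

Lemma is_derive_arsinh_primitive t :
  is_derive (fun x => / 2 * (x * sqrt (1 + x ^ 2) + ln (x + sqrt (1 + x ^ 2)))) t
    (phi_integrand 0 t).
Proof.
  pose proof (is_derive_sqrt_1_plus_sq t) as Hs.
  pose proof (is_derive_comp ln (fun x => x + sqrt (1 + x ^ 2)) t _ _
    (is_derive_ln _ (add_sqrt_1_plus_sq_pos t)) (is_derive_plus _ _ _ _ _ (is_derive_id t) Hs))
    as Hln.
  pose proof (is_derive_scal _ t (/ 2) _
    (is_derive_plus _ _ _ _ _ (is_derive_mult _ _ _ _ _ (is_derive_id t) Hs Rmult_comm) Hln)) as H.
  apply (is_derive_eq_r _ _ _ _ H); unfold phi_integrand, scal, mult, plus; cbn -[pow sqrt Rmult Rplus].
  pose proof (sqrt_1_plus_sq_pos t) as Hpos; pose proof (sqrt_1_plus_sq_sq t) as Hsq.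
  pose proof (add_sqrt_1_plus_sq_pos t) as Hsum.
  set (s := sqrt (1 + t ^ 2)) in *; clearbody s.
  replace ((1 + t / s) * / (t + s)) with (/ s) by (field; lra).
  replace (t * (t / s)) with ((s * s - 1) / s) by (rewrite Hsq; field; lra).
  simpl; field; lra.
Qed.

Lemma phi_0 : phi 0 = I0.
Proof.
  unfold phi; rewrite (RInt_primitive _ (phi_integrand 0) _ _ is_derive_arsinh_primitive
                         (phi_integrand_continuous 0)).
  unfold I0; replace (1 ^ 2) with 1 by ring; replace (0 ^ 2) with 0 by ring.
  replace (1 + 1) with 2 by ring; rewrite Rplus_0_r, Rplus_0_l, sqrt_1, ln_1; field.
Qed.

Lemma is_RInt_phi n : is_RInt (phi_integrand n) 0 1 (phi n).
Proof.
  apply (RInt_correct (phi_integrand n)), ex_RInt_continuous.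
  intros; apply phi_integrand_continuous.
Qed.

Lemma phi_recurrence n : (INR n + 1) * phi n + (INR n + 4) * phi (n + 2) = 2 * sqrt 2.
Proof.
  set (f t := (INR n + 1) * phi_integrand n t + (INR n + 4) * phi_integrand (n + 2) t).
  assert (Hlin : is_RInt f 0 1 ((INR n + 1) * phi n + (INR n + 4) * phi (n + 2))).
  { apply (is_RInt_plus (V := R_NormedModule)); apply (is_RInt_scal (V := R_NormedModule));
      apply is_RInt_phi. }
  rewrite <- (is_RInt_unique _ _ _ _ Hlin), (RInt_primitive _ _ _ _ (is_derive_recurrence_primitive n)).
  - rewrite pow1, pow_i by lia; replace (1 + 1 ^ 2) with 2 by ring; ring.
  - intros t; apply (continuous_plus (V := R_NormedModule));
      apply (continuous_scal_r (V := R_NormedModule)); apply phi_integrand_continuous.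
Qed.

Lemma linear_recurrence_solution (u c b : nat -> R) :
  (forall k, c k <> 0) ->
  (forall k, u (S k) = c (S k) / c k * u k + b (S k)) ->
  forall k, u k = c k * (u 0%nat / c 0%nat + sum_n_m (fun p => b p / c p) 1 k).
Proof.
  intros Hc Hu k; induction k as [| k IH].
  - rewrite sum_n_m_zero by lia; unfold zero; simpl; field; apply Hc.
  - rewrite Hu, IH, (sum_n_Sm (G := R_AbelianMonoid)) by lia; unfold plus; simpl.
    field; repeat split; apply Hc.
Qed.

Lemma pow_m1_sq k : (-1) ^ k * (-1) ^ k = 1.
Proof. rewrite <- Rpow_mult_distr; replace (-1 * -1) with 1 by ring; apply pow1. Qed.

Lemma binomial_central_pos k : 0 < Binomial.C (2 * k) k.
Proof.
  unfold Binomial.C; apply Rdiv_lt_0_compat; [| apply Rmult_lt_0_compat]; apply INR_fact_lt_0.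
Qed.

Lemma binomial_central_succ k :
  Binomial.C (2 * S k) (S k) = 2 * (2 * INR k + 1) / (INR k + 1) * Binomial.C (2 * k) k.
Proof.
  unfold Binomial.C.
  replace (2 * S k - S k)%nat with (S k) by lia; replace (2 * k - k)%nat with k by lia.
  replace (2 * S k)%nat with (S (S (2 * k))) by lia.
  rewrite !fact_simpl, !mult_INR, !S_INR, mult_INR.
  pose proof (INR_fact_neq_0 k); pose proof (INR_fact_neq_0 (2 * k)); pose proof (pos_INR k).
  simpl (INR 2); field; repeat split; lra.
Qed.

Definition scaled_catalan (k : nat) : R :=
  (-1) ^ k / 4 ^ k * (Binomial.C (2 * k) k / INR (k + 1)).

Lemma scaled_catalan_0 : scaled_catalan 0 = 1.
Proof. unfold scaled_catalan, Binomial.C; simpl; field. Qed.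

Lemma scaled_catalan_neq0 k : scaled_catalan k <> 0.
Proof.
  pose proof (binomial_central_pos k); pose proof (not_0_INR (k + 1) ltac:(lia)).
  pose proof (pow_nonzero (-1) k ltac:(lra)); pose proof (pow_nonzero 4 k ltac:(lra)).
  unfold scaled_catalan; set (c := Binomial.C (2 * k) k) in *; clearbody c; unfold Rdiv.
  repeat apply Rmult_integral_contrapositive_currified; try apply Rinv_neq_0_compat; lra.
Qed.

Lemma scaled_catalan_succ k :
  scaled_catalan (S k) = - (2 * INR k + 1) / (2 * INR k + 4) * scaled_catalan k.
Proof.
  pose proof (pos_INR k); pose proof (pow_lt 4 k ltac:(lra)).
  unfold scaled_catalan; rewrite binomial_central_succ.
  set (c := Binomial.C (2 * k) k); clearbody c.
  rewrite !plus_INR, !S_INR; simpl; field; lra.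
Qed.

Lemma inv_scaled_catalan k :
  / INR (k + 1) / scaled_catalan k = (-1) ^ k * 4 ^ k / Binomial.C (2 * k) k.
Proof.
  pose proof (binomial_central_pos k); pose proof (pow_lt 4 k ltac:(lra)).
  pose proof (pow_nonzero (-1) k ltac:(lra)); pose proof (pos_INR k).
  unfold scaled_catalan; set (c := Binomial.C (2 * k) k) in *; clearbody c.
  rewrite <- (Rmult_1_l (/ INR (k + 1))), <- (pow_m1_sq k), plus_INR; simpl.
  field; lra.
Qed.

Lemma phi_even_succ k :
  phi (2 * S k) =
  scaled_catalan (S k) / scaled_catalan k * phi (2 * k) + sqrt 2 / INR (S k + 1).
Proof.
  pose proof (phi_recurrence (2 * k)) as Hrec.
  replace (2 * k + 2)%nat with (2 * S k)%nat in Hrec by lia.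
  rewrite mult_INR in Hrec; simpl (INR 2) in Hrec.
  pose proof (scaled_catalan_neq0 k); pose proof (pos_INR k).
  rewrite scaled_catalan_succ, Nat.add_1_r, !S_INR.
  set (a := phi (2 * k)) in *; set (b := phi (2 * S k)) in *; clearbody a b.
  assert (Hb : b = (2 * sqrt 2 - (2 * INR k + 1) * a) / (2 * INR k + 4))
    by (rewrite <- Hrec; field; lra).
  rewrite Hb; field; repeat split; (assumption || lra).
Qed.

Theorem theorem3p0p3 (k : nat) :
  phi (2 * k) =
  (-1) ^ k / 4 ^ k * (Binomial.C (2 * k) k / INR (k + 1)) *
  (I0 + sqrt 2 * sum_n_m (fun p => (-1) ^ p * 4 ^ p / Binomial.C (2 * p) p) 1 k).
Proof.
  rewrite (linear_recurrence_solution (fun k => phi (2 * k)) scaled_catalan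
             (fun p => sqrt 2 / INR (p + 1)) scaled_catalan_neq0 phi_even_succ k).
  fold (scaled_catalan k); f_equal; f_equal.
  - rewrite scaled_catalan_0, Nat.mul_0_r, phi_0; field.
  - rewrite <- (sum_n_m_mult_l (K := R_Ring)).
    apply sum_n_m_ext; intros p; unfold mult; simpl.
    rewrite <- inv_scaled_catalan; unfold Rdiv; ring.
Qed.
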